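(* Let $(U_n)_{n\in\mathbb N}$ and $(V_n)_{n\in\mathbb N}$ be sequences of real-valued uniformly integrable random variables with $U_n\le V_n$ almost surely for all $n$. Assume $V_n\to V$ in distribution for some random variable $V$. If $\mathbb E[U_n]\to\mathbb E[V]$, then $U_n\to V$ in distribution as $n\to\infty$. *)

From HB Require Import structures.
From mathcomp Require Import all_boot all_order all_algebra.
From mathcomp Require Import all_classical all_reals all_analysis.
Set Implicit Arguments. Unset Strict Implicit. Unset Printing Implicit Defensive.
Import Order.TTheory GRing.Theory Num.Theory.
Import numFieldNormedType.Exports.
Local Open Scope classical_set_scope.
Local Open Scope ring_scope.

Definition unif_integrable d (T : measurableType d) (R : realType)
    (P : probability T R) (X : nat -> {RV P >-> R}) : Prop :=
  forall eps : R, 0 < eps -> exists K : R, forall n : nat,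
    let A := [set w | K < `|X n w|] in
    (\int[P]_(w in A) (`|X n w|)%:E <= eps%:E)%E.

Definition cvg_in_distribution d (T : measurableType d) d' (T' : measurableType d')
    (R : realType) (P : probability T R) (P' : probability T' R)
    (X : nat -> {RV P >-> R}) (Y : {RV P' >-> R}) : Prop :=
  forall f : R -> R, continuous f -> (exists M : R, forall x, `|f x| <= M) ->
    ((fun n => 'E_P[f \o X n]) @ \oo --> 'E_P'[f \o Y])%E.

From HB Require Import structures.
From mathcomp Require Import all_boot all_order all_algebra.
From mathcomp Require Import all_classical all_reals all_analysis.
From mathcomp Require Import measurable_realfun lra.
Import Order.TTheory GRing.Theory Num.Theory.
Import numFieldNormedType.Exports.
Set Implicit Arguments. Unset Strict Implicit. Unset Printing Implicit Defensive.
Local Open Scope classical_set_scope.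
Local Open Scope ring_scope.

(* Since U_n <= W_n almost surely, E|W_n - U_n| = E[W_n] - E[U_n].  Uniform
   integrability upgrades W_n -> V in distribution to E[W_n] -> E[V]: after
   truncation at a level k the truncation errors are uniformly small, and
   E[clamp_k W_n] -> E[clamp_k V].  Hence W_n - U_n -> 0 in L^1.  For a bounded
   continuous f, uniform continuity of f on a large segment and the
   L^1-boundedness of (W_n) then give E|f(U_n) - f(W_n)| -> 0, so E[f(U_n)] has
   the same limit E[f(V)] as E[f(W_n)]. *)

Section clamp.
Context {R : realType}.
Implicit Types M x y : R.

Definition clamp M x := if x < - M then - M else if M < x then M else x.

Lemma normr_clamp_le M x : 0 <= M -> `|clamp M x| <= M.
Proof.
move=> M0; rewrite /clamp ler_norml.
by case: ltrP => ?; case: ltrP => ?; apply/andP; split; lra.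
Qed.

Lemma clamp_id M x : `|x| <= M -> clamp M x = x.
Proof.
rewrite ler_norml /clamp => /andP[? ?].
by case: ltrP => ?; [lra|]; case: ltrP => ?; lra.
Qed.

Lemma ler_dist_clamp M x y : 0 <= M -> `|clamp M x - clamp M y| <= `|x - y|.
Proof.
move=> M0; have /andP[? ?] : - `|x - y| <= x - y <= `|x - y|.
  by rewrite -ler_norml.
rewrite /clamp ler_norml.
by do 4 case: ltrP => ?; apply/andP; split; lra.
Qed.

Lemma normr_sub_clamp_le M x : 0 <= M -> `|x - clamp M x| <= `|x|.
Proof.
move=> M0; have /andP[? ?] : - `|x| <= x <= `|x| by rewrite -ler_norml.
rewrite /clamp ler_norml.
by do 2 case: ltrP => ?; apply/andP; split; lra.
Qed.

Lemma continuous_clamp M : 0 <= M -> continuous (clamp M).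
Proof.
move=> M0 x; apply/cvgrPdist_le => e e0.
have /cvgrPdist_le /(_ e e0) := @cvg_id _ (nbhs x).
by apply: filterS => y; apply: le_trans; exact: ler_dist_clamp.
Qed.

End clamp.

Section continuous_bounded.
Context {R : realType}.
Implicit Types f : R -> R.

(* Heine-Cantor on the compact segment [-L, L]. *)
Lemma continuous_unif_near_segment f (L e : R) : continuous f -> 0 < e ->
  exists2 δ : R, 0 < δ &
    forall x y, `|x| <= L -> `|x - y| < δ -> `|f x - f y| <= e.
Proof.
move=> cf e0.
pose close δ x := forall y, `|x - y| < δ -> `|f x - f y| <= e.
have : \forall δ \near (0 : R)^'+, `[- L, L] `<=` close δ.
  apply: ((compact_near_coveringP _).1 (@segment_compact R (- L) L) R
    (0 : R)^'+ close _) => x _; have /cvgrPdist_lt /(_ (e / 2)) := cf x.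
  move=> /(_ ltac:(lra)) /nbhs_ballP[η /= η0 fη].
  near=> x' δ => y /= x'y.
  have xx' : `|x - x'| < η / 2.
    by near: x'; apply: cvgr_dist_lt; [exact: cvg_id|lra].
  have δη : δ < η / 2 by near: δ; apply: nbhs_right_lt; lra.
  have fxy : `|f x - f y| < e / 2.
    by apply: fη; rewrite /ball /= (le_lt_trans (ler_distD x' x y))//; lra.
  have fxx' : `|f x - f x'| < e / 2 by apply: fη; rewrite /ball /=; lra.
  by rewrite distrC in fxx'; have := ler_distD (f x) (f x') (f y); lra.
move=> /(filterI (nbhs_right_gt 0)) /filter_ex[δ [δ0 closeδ]].
exists δ => // x y xL; apply: closeδ.
by rewrite /= in_itv /= -ler_norml.
Unshelve. all: by end_near.
Qed.

Lemma ler_dist_bounded_modulus f (M L δ e u w : R) :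
  0 < L -> 0 < δ -> 0 <= e -> (forall x, `|f x| <= M) ->
  (forall x y, `|x| <= L -> `|x - y| < δ -> `|f x - f y| <= e) ->
  `|f u - f w| <= e + 2 * M / L * `|w| + 2 * M / δ * `|w - u|.
Proof.
move=> L0 δ0 e0 fM modf.
have M0 : 0 <= M := le_trans (normr_ge0 _) (fM 0).
have f2M : `|f u - f w| <= 2 * M.
  by rewrite (le_trans (ler_normB _ _))//; have := fM u; have := fM w; lra.
have scale a b : 0 < a -> a <= b -> 2 * M <= 2 * M / a * b.
  move=> a0 ab; rewrite mulrAC ler_pdivlMr// ler_wpM2l//; lra.
have ? : 0 <= 2 * M / L * `|w| by rewrite !mulr_ge0 ?invr_ge0 ?(ltW L0).
have ? : 0 <= 2 * M / δ * `|w - u| by rewrite !mulr_ge0 ?invr_ge0 ?(ltW δ0).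
have [wL|/ltW Lw] := lerP `|w| L; last by have := scale _ _ L0 Lw; lra.
have [wuδ|δwu] := ltrP `|w - u| δ; last by have := scale _ _ δ0 δwu; lra.
by have := modf w u wL wuδ; rewrite distrC; lra.
Qed.

End continuous_bounded.

Lemma cvg_EFinP {R : realType} (r : nat -> R) (l : R) :
  ((fun n => (r n)%:E) @ \oo --> l%:E)%E <-> r @ \oo --> l.
Proof. by split=> [/fine_cvg//|rl]; apply: cvg_EFin => //; exact: nearW. Qed.

Lemma cvg_bounded_fin_num {R : realType} (r : nat -> R) (C : R) (l : \bar R) :
  (forall n, `|r n| <= C) -> ((fun n => (r n)%:E) @ \oo --> l)%E ->
  l \is a fin_num.
Proof.
move=> rC rl.
have lC : (l <= C%:E)%E.
  apply: (cvge_le _ rl); apply: nearW => n.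
  by rewrite lee_fin (le_trans (ler_norm _)).
have Cl : (- C%:E <= l)%E.
  by apply: (cvge_ge _ rl); apply: nearW => n; rewrite lee_fin lerNnormlW.
by rewrite fin_numElt (lt_le_trans _ Cl) ?(le_lt_trans lC) ?ltNyr ?ltry.
Qed.

Section integrable_real.
Context d (T : measurableType d) (R : realType).
Variable mu : {measure set T -> \bar R}.
Implicit Types f g : T -> R.

Lemma fin_num_integral_integrable (f : T -> \bar R) : measurable_fun setT f ->
  (\int[mu]_x f x \is a fin_num)%E -> mu.-integrable setT f.
Proof.
move=> mf; rewrite integralE fin_numB => /andP[fpos fneg].
apply/integrableP; split => //.
rewrite -/((abse \o f)) fune_abse ge0_integralD//.
- by rewrite ltey_eq fin_numD fpos fneg.
- exact: measurable_funepos.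
- exact: measurable_funeneg.
Qed.

Lemma EFin_Rintegral f : mu.-integrable setT (EFin \o f) ->
  (\int[mu]_x f x)%:E = (\int[mu]_x (f x)%:E)%E.
Proof. by move=> fi; rewrite fineK// integrable_fin_num. Qed.

Lemma ler_dist_Rintegral f g :
  mu.-integrable setT (EFin \o f) -> mu.-integrable setT (EFin \o g) ->
  `|\int[mu]_x f x - \int[mu]_x g x| <= \int[mu]_x `|f x - g x|.
Proof.
move=> fi gi; rewrite -RintegralB//.
exact: le_normr_Rintegral (integrableB measurableT fi gi).
Qed.

Lemma Rintegral_dist_ae_le f g :
  mu.-integrable setT (EFin \o f) -> mu.-integrable setT (EFin \o g) ->
  {ae mu, forall x, f x <= g x} ->
  \int[mu]_x `|g x - f x| = \int[mu]_x g x - \int[mu]_x f x.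
Proof.
move=> fi gi fg; rewrite -RintegralB//; congr fine.
have /measurable_EFinP mf := measurable_int _ fi.
have /measurable_EFinP mg := measurable_int _ gi.
have mgf := measurable_funB mg mf.
apply: ae_eq_integral => //.
- exact/measurable_EFinP/measurableT_comp.
- exact/measurable_EFinP.
- by apply: filterS fg => x fgx _ /=; rewrite ger0_norm// subr_ge0.
Qed.

Lemma integral_dist_clamp_le f (K M : R) : measurable_fun setT f -> `|K| <= M ->
  (\int[mu]_x (`|f x - clamp M (f x)|)%:E <=
   \int[mu]_(x in [set x | (K < `|f x|)%R]) (`|f x|)%:E)%E.
Proof.
move=> mf KM; have M0 : 0 <= M := le_trans (normr_ge0 K) KM.
have mnf : measurable_fun setT (fun x => `|f x|) by exact: measurableT_comp.
have mtail : measurable [set x | K < `|f x|].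
  rewrite -[X in measurable X]setTI -preimage_itvoy.
  exact: mnf measurableT _ (measurable_itv _).
rewrite [leRHS]integral_mkcond.
apply: ge0_le_integral => //.
- apply/measurable_EFinP/measurableT_comp => //.
  apply: measurable_funB => //; apply: measurableT_comp mf.
  exact: continuous_measurable_fun (continuous_clamp M0).
- apply/(measurable_restrictT _ mtail).1/measurable_funTS.
  exact/measurable_EFinP.
- move=> x _; rewrite /patch; case: ifPn => [_|].
    by rewrite lee_fin normr_sub_clamp_le.
  rewrite notin_setE /= => /negP; rewrite -leNgt => fxK.
  by rewrite clamp_id ?subrr ?normr0// (le_trans fxK)// (le_trans (ler_norm K)).
Qed.

Lemma cvg_Rintegral_dist_clamp f : mu.-integrable setT (EFin \o f) ->
  (fun k : nat => \int[mu]_x `|f x - clamp k%:R (f x)|) @ \oo --> 0.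
Proof.
move=> fi; have /measurable_EFinP mf := measurable_int _ fi.
have mfk (k : nat) : measurable_fun setT (fun x => (f x - clamp k%:R (f x))%:E).
  apply/measurable_EFinP/measurable_funB => //; apply: measurableT_comp mf.
  exact: continuous_measurable_fun (continuous_clamp (ler0n _ k)).
have fk0 : {ae mu, forall x, setT x ->
    (fun k : nat => (f x - clamp k%:R (f x))%:E) @ \oo --> 0%E}.
  apply: aeW => x _; apply: cvg_near_cst; near=> k.
  by rewrite clamp_id ?subrr//; near: k; exact: nbhs_infty_ger.
have fk_dom : {ae mu, forall x (k : nat), setT x ->
    (`|(f x - clamp k%:R (f x))%:E| <= (`|f x|)%:E)%E}.
  by apply: aeW => x k _; rewrite lee_fin normr_sub_clamp_le.
have [_ + _] := dominated_convergence measurableT mfk (measurable_cst _) fk0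
  (integrable_norm fi) fk_dom.
move/fine_cvg; apply: cvg_trans; apply: near_eq_cvg; apply: nearW => k /=.
by congr fine; apply: eq_integral => x _; rewrite /= subr0.
Unshelve. all: by end_near.
Qed.

End integrable_real.

Lemma integrable_comp_bounded d (T : measurableType d) (R : realType)
    (mu : {finite_measure set T -> \bar R}) (f : R -> R) (M : R) (X : T -> R) :
  continuous f -> (forall x, `|f x| <= M) -> measurable_fun setT X ->
  mu.-integrable setT (EFin \o (f \o X)).
Proof.
move=> cf fM mX.
have Mi : mu.-integrable setT (EFin \o cst M).
  exact: finite_measure_integrable_cst.
apply: (le_integrable measurableT _ _ Mi).
  apply/measurable_EFinP/measurableT_comp => //.
  exact: continuous_measurable_fun.
by move=> x _ /=; rewrite lee_fin (le_trans (fM _)) ?ler_norm.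
Qed.

Section probability_real.
Context d (T : measurableType d) (R : realType) (P : probability T R).

Lemma expectation_Rintegral (X : T -> R) : P.-integrable setT (EFin \o X) ->
  ('E_P[X] = (\int[P]_x X x)%:E)%E.
Proof. by move=> Xi; rewrite unlock EFin_Rintegral. Qed.

Lemma integral_normr_le_clamp (X : T -> R) (M : R) :
  measurable_fun setT X -> 0 <= M ->
  (\int[P]_x (`|X x|)%:E <= M%:E + \int[P]_x (`|X x - clamp M (X x)|)%:E)%E.
Proof.
move=> mX M0.
have mXc : measurable_fun setT (fun x => (`|X x - clamp M (X x)|)%:E).
  apply/measurable_EFinP/measurableT_comp => //; apply: measurable_funB => //.
  exact: measurableT_comp (continuous_measurable_fun (continuous_clamp M0)) mX.
rewrite -[M%:E]mule1 -(probability_setT P) -integral_cst// -ge0_integralD//.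
apply: ge0_le_integral => //.
- exact/measurable_EFinP/measurableT_comp.
- by apply/emeasurable_funD.
- move=> x _; rewrite lee_fin; have := normr_clamp_le (X x) M0.
  by have := ler_distD (clamp M (X x)) (X x) 0; rewrite !subr0; lra.
Qed.

Lemma unif_integrable_bounded (X : nat -> {RV P >-> R}) : unif_integrable X ->
  exists C, forall n,
    P.-integrable setT (EFin \o X n) /\ \int[P]_x `|X n x| <= C.
Proof.
move=> /(_ 1 ltr01)[K tailK]; exists (`|K| + 1) => n.
have mX := measurable_funPT (X n).
have bound : (\int[P]_x (`|X n x|)%:E <= (`|K| + 1)%:E)%E.
  rewrite EFinD; apply: le_trans (integral_normr_le_clamp mX (normr_ge0 K)) _.
  by rewrite leeD2l//; apply: le_trans (tailK n); exact: integral_dist_clamp_le.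
have Xi : P.-integrable setT (EFin \o X n).
  apply/integrableP; split; first exact/measurable_EFinP.
  exact: le_lt_trans bound (ltry _).
by split=> //; rewrite -lee_fin EFin_Rintegral ?(integrable_norm Xi).
Qed.

End probability_real.

Section L1_comparison.
Context d (T : measurableType d) (R : realType) (P : probability T R).
Variables (f : R -> R) (M : R).
Hypotheses (cf : continuous f) (fM : forall x, `|f x| <= M).

Lemma Rintegral_dist_comp_le (L δ e : R) (X Y : T -> R) :
  0 < L -> 0 < δ -> 0 <= e ->
  (forall x y, `|x| <= L -> `|x - y| < δ -> `|f x - f y| <= e) ->
  P.-integrable setT (EFin \o X) -> P.-integrable setT (EFin \o Y) ->
  `|\int[P]_x f (X x) - \int[P]_x f (Y x)| <=
  e + 2 * M / L * \int[P]_x `|Y x| + 2 * M / δ * \int[P]_x `|Y x - X x|.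
Proof.
move=> L0 δ0 e0 modf Xi Yi.
have /measurable_EFinP mX := measurable_int _ Xi.
have /measurable_EFinP mY := measurable_int _ Yi.
have fXi := integrable_comp_bounded P cf fM mX.
have fYi := integrable_comp_bounded P cf fM mY.
have Yni := integrable_norm Yi.
have YXni := integrable_norm (integrableB measurableT Yi Xi).
apply: le_trans (ler_dist_Rintegral fXi fYi) _.
have ei := finite_measure_integrable_cst P e measurableT.
have -> : e = \int[P]_x e by rewrite Rintegral_cst//= probability_setT mulr1.
have LYi := integrableZl measurableT (2 * M / L) Yni.
have δYXi := integrableZl measurableT (2 * M / δ) YXni.
rewrite -2?RintegralZl// -2?RintegralD//;
  last exact (integrableD measurableT ei LYi).
apply: le_Rintegral => //.
- exact: integrable_norm (integrableB measurableT fXi fYi).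
- exact (integrableD measurableT (integrableD measurableT ei LYi) δYXi).
- move=> x _; exact: ler_dist_bounded_modulus.
Qed.

Lemma cvg_Rintegral_comp_sub (C : R) (X Y : nat -> T -> R) :
  (forall n, P.-integrable setT (EFin \o X n)) ->
  (forall n, P.-integrable setT (EFin \o Y n) /\ \int[P]_x `|Y n x| <= C) ->
  (fun n => \int[P]_x `|Y n x - X n x|) @ \oo --> 0 ->
  (fun n => \int[P]_x f (X n x) - \int[P]_x f (Y n x)) @ \oo --> 0.
Proof.
move=> Xi YC YX0; apply/cvgrPdist_le => eps eps0.
have M0 : 0 <= M := le_trans (normr_ge0 _) (fM 0).
have C0 : 0 <= C :=
  le_trans (Rintegral_ge0 _ (fun x _ => normr_ge0 (Y 0 x))) (YC 0).2.
pose e := eps / 3; have e0 : 0 < e by rewrite divr_gt0.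
have shrink a : 0 <= a -> a * (e / (a + 1)) <= e.
  by move=> a0; rewrite mulrCA ler_piMr ?(ltW e0)// ler_pdivrMr ?mul1r; lra.
(* L and r make the last two terms of Rintegral_dist_comp_le at most e. *)
pose L := (2 * M * C + 1) / e.
have L0 : 0 < L by rewrite divr_gt0// ltr_wpDl ?mulr_ge0.
have [δ δ0 modf] := continuous_unif_near_segment L cf e0.
pose r := e / (2 * M / δ + 1).
have r0 : 0 < r by rewrite divr_gt0// ltr_wpDl// divr_ge0 ?mulr_ge0 ?(ltW δ0).
have /cvgrPdist_le /(_ r r0) := YX0.
apply: filterS => n; rewrite !sub0r !normrN ger0_norm ?Rintegral_ge0// => YXn.
apply: le_trans (Rintegral_dist_comp_le L0 δ0 (ltW e0) modf (Xi n) (YC n).1) _.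
have YL : 2 * M / L * \int[P]_x `|Y n x| <= e.
  apply: le_trans (ler_wpM2l _ (YC n).2) _.
    by rewrite !mulr_ge0 ?invr_ge0 ?(ltW L0).
  by rewrite mulrAC invf_div shrink ?mulr_ge0.
have YXδ : 2 * M / δ * \int[P]_x `|Y n x - X n x| <= e.
  apply: le_trans (ler_wpM2l _ YXn) _.
    by rewrite !mulr_ge0 ?invr_ge0 ?(ltW δ0).
  by rewrite shrink ?divr_ge0 ?mulr_ge0 ?(ltW δ0).
by rewrite /e in YL YXδ *; lra.
Qed.

End L1_comparison.

Section convergence_in_distribution.
Context d (T : measurableType d) d' (T' : measurableType d') (R : realType).
Variables (P : probability T R) (P' : probability T' R).

Lemma cvg_in_distributionP (X : nat -> {RV P >-> R}) (Y : {RV P' >-> R}) :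
  cvg_in_distribution X Y <->
  forall f : R -> R, continuous f -> (exists M, forall x, `|f x| <= M) ->
    (fun n => \int[P]_x f (X n x)) @ \oo --> \int[P']_x f (Y x).
Proof.
suff E f M : continuous f -> (forall x, `|f x| <= M) ->
    ((fun n => 'E_P[f \o X n]) @ \oo --> 'E_P'[f \o Y])%E <->
    (fun n => \int[P]_x f (X n x)) @ \oo --> \int[P']_x f (Y x).
  by split=> XY f cf [M fM]; apply/(E f M cf fM)/XY => //; exists M.
move=> cf fM.
have fXi n := integrable_comp_bounded P cf fM (measurable_funPT (X n)).
have fYi := integrable_comp_bounded P' cf fM (measurable_funPT Y).
under eq_fun => n do rewrite (expectation_Rintegral (fXi n)).
by rewrite (expectation_Rintegral fYi); exact: cvg_EFinP.
Qed.

Lemma cvg_expectation_L1_bounded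
    (X : nat -> {RV P >-> R}) (Y : {RV P' >-> R}) C :
  (forall n, P.-integrable setT (EFin \o X n) /\ \int[P]_x `|X n x| <= C) ->
  ((fun n => 'E_P[X n]) @ \oo --> 'E_P'[Y])%E ->
  P'.-integrable setT (EFin \o Y) /\
  (fun n => \int[P]_x X n x) @ \oo --> \int[P']_x Y x.
Proof.
move=> XC XY.
have EX : (fun n => 'E_P[X n])%E = (fun n => (\int[P]_x X n x)%:E).
  by apply/funext => n; rewrite expectation_Rintegral ?(XC n).1.
rewrite EX in XY.
have Yfin : ('E_P'[Y] \is a fin_num)%E.
  apply: cvg_bounded_fin_num XY => n.
  exact: le_trans (le_normr_Rintegral measurableT (XC n).1) (XC n).2.
have Yi : P'.-integrable setT (EFin \o Y).
  apply: fin_num_integral_integrable; last by rewrite -expectation_def.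
  exact/measurable_EFinP/measurable_funPT.
by split=> //; apply/cvg_EFinP; rewrite -expectation_Rintegral.
Qed.

Lemma cvg_Rintegral_unif_integrable
    (X : nat -> {RV P >-> R}) (Y : {RV P' >-> R}) :
  unif_integrable X -> cvg_in_distribution X Y ->
  P'.-integrable setT (EFin \o Y) ->
  (fun n => \int[P]_x X n x) @ \oo --> \int[P']_x Y x.
Proof.
move=> XUI /cvg_in_distributionP XY Yi; apply/cvgrPdist_le => eps eps0.
pose e := eps / 3; have e0 : 0 < e by rewrite divr_gt0.
have [C XC] := unif_integrable_bounded XUI.
have [K tailK] := XUI _ e0.
have /cvgrPdist_le /(_ _ e0) Ytail := cvg_Rintegral_dist_clamp Yi.
have [k [Yk Kk]] := filter_ex (filterI Ytail (nbhs_infty_ger `|K|)).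
rewrite /= sub0r normrN ger0_norm ?Rintegral_ge0// in Yk.
have k0 : 0 <= k%:R :> R := ler0n _ _.
have clamp_k x : `|clamp k%:R x| <= k%:R := normr_clamp_le x k0.
have cXi n := integrable_comp_bounded P (continuous_clamp k0) clamp_k
  (measurable_funPT (X n)).
have cYi := integrable_comp_bounded P' (continuous_clamp k0) clamp_k
  (measurable_funPT Y).
have /cvgrPdist_le /(_ _ e0) :=
  XY _ (continuous_clamp k0) (ex_intro _ _ clamp_k).
apply: filterS => n XYn.
have Xk : \int[P]_x `|X n x - clamp k%:R (X n x)| <= e.
  rewrite -lee_fin EFin_Rintegral.
    by have := tailK n; apply: le_trans; exact: integral_dist_clamp_le.
  exact: integrable_norm (integrableB measurableT (XC n).1 (cXi n)).
(* |∫X_n - ∫Y| <= ∫|X_n - clamp X_n| + |∫clamp X_n - ∫clamp Y|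
                  + ∫|Y - clamp Y| *)
have := ler_dist_Rintegral (XC n).1 (cXi n).
have := ler_dist_Rintegral Yi cYi.
have := ler_distD (\int[P']_x clamp k%:R (Y x)) (\int[P']_x Y x)
  (\int[P]_x X n x).
have := ler_distD (\int[P]_x clamp k%:R (X n x)) (\int[P']_x clamp k%:R (Y x))
  (\int[P]_x X n x).
rewrite (distrC (\int[P]_x clamp k%:R (X n x))) /e in Xk Yk XYn *; lra.
Qed.

Lemma cvg_in_distribution_L1_close
    (X Y : nat -> {RV P >-> R}) (Z : {RV P' >-> R}) C :
  (forall n, P.-integrable setT (EFin \o X n)) ->
  (forall n, P.-integrable setT (EFin \o Y n) /\ \int[P]_x `|Y n x| <= C) ->
  (fun n => \int[P]_x `|Y n x - X n x|) @ \oo --> 0 ->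
  cvg_in_distribution Y Z -> cvg_in_distribution X Z.
Proof.
move=> Xi YC YX0 /cvg_in_distributionP YZ; apply/cvg_in_distributionP.
move=> f cf [M fM].
have XY0 := cvg_Rintegral_comp_sub (X := fun n => X n) (Y := fun n => Y n)
  cf fM Xi YC YX0.
rewrite -[X in _ --> X]add0r.
under eq_fun => n do
  rewrite -(subrK (\int[P]_x f (Y n x)) (\int[P]_x f (X n x))).
exact: cvgD XY0 (YZ f cf (ex_intro _ M fM)).
Qed.

End convergence_in_distribution.

Unset Implicit Arguments.

Theorem lemma3p5 (d : measure_display) (T : measurableType d)
    (d' : measure_display) (T' : measurableType d') (R : realType)
    (P : probability T R) (P' : probability T' R)
    (U W : nat -> {RV P >-> R}) (V : {RV P' >-> R}) :
  unif_integrable U -> unif_integrable W ->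
  (forall n, {ae P, forall x, U n x <= W n x}) ->
  cvg_in_distribution W V ->
  ((fun n => 'E_P[U n]) @ \oo --> 'E_P'[V])%E ->
  cvg_in_distribution U V.
Proof.
move=> UUI WUI UW WV UV.
have [CU UC] := unif_integrable_bounded UUI.
have [CW WC] := unif_integrable_bounded WUI.
have Ui n := (UC n).1.
have [Vi EU] := cvg_expectation_L1_bounded UC UV.
have EW := cvg_Rintegral_unif_integrable WUI WV Vi.
apply: (cvg_in_distribution_L1_close Ui WC _ WV).
have -> : (fun n => \int[P]_x `|W n x - U n x|) =
    (fun n => \int[P]_x W n x - \int[P]_x U n x).
  by apply/funext => n; exact: Rintegral_dist_ae_le (Ui n) (WC n).1 (UW n).
by rewrite -(subrr (\int[P']_x V x)); exact: cvgB EW EU.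
Qed.
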